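(* Let $(X,\rho)$ be a complete locally compact $\mathbb R$-tree. The topological space $\mathcal O_+(X)$, with the topology generated by the base $\mathcal B$ described below, is Hausdorff.
   Context: An $\mathbb R$-tree is a geodesic metric space in which any two points are joined by a unique segment and $[xy]\subset[xz]\cup[zy]$ for all $x,y,z$. $\mathcal O_+(X)$ is the set of partial orders $\tau$ on $X$ such that any two points have a supremum $x\vee y$, $x\,\tau\, z\,\tau\, y$ implies $\rho(x,z)+\rho(z,y)=\rho(x,y)$, $\rho(x,y)=\rho(x,x\vee y)+\rho(x\vee y,y)$ for all $x,y$, and every upper cone $\{y: x\,\tau\, y\}$ is linearly ordered. $\mathcal O_+^r(X)$ consists of those having a greatest element (root); for $y\in X$, $\preceq_{(y)}$ is the order with root $y$ ($s\preceq_{(y)}t$ iff $t\in[ys]$). $\mathcal O_+^r(X)$ carries the Hausdorff metric $\operatorname{Hd}$ of orders viewed as subsets of $X\times X$ with metric $d_+((x_1,x_2),(y_1,y_2))=\rho(x_1,y_1)+\rho(x_2,y_2)$. $\mathcal B$ consists of all open subsets of $(\mathcal O_+^r(X),\operatorname{Hd})$ together with all sets $\mathcal U_{(x,y)}=\{\tau\in\mathcal O_+(X): x\,\tau\, y\}\setminus\{\preceq_{(y)}\}$ for $x\ne y$ in $X$. *)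

From Stdlib Require Import Rdefinitions.
From HB Require Import structures.
From mathcomp Require Import all_boot all_order all_algebra.
From mathcomp Require Import all_classical all_reals.
From mathcomp Require Import ereal Rstruct.


Set Implicit Arguments.
Unset Strict Implicit.
Unset Printing Implicit Defensive.

Import Order.TTheory GRing.Theory Num.Theory.
Local Open Scope classical_set_scope.
Local Open Scope ring_scope.

Section RTree.
Variable X : Type.
Variable rho : X -> X -> R.

Definition is_metric : Prop :=
  [/\ forall x y, rho x y = 0 <-> x = y,
      forall x y, rho x y = rho y x &
      forall x y z, rho x z <= rho x y + rho y z].

Definition mball (x : X) (e : R) : set X := [set y | rho x y < e].

Definition mopen (U : set X) : Prop :=
  forall x, U x -> exists2 e : R, 0 < e & mball x e `<=` U.

Definition mcompact (K : set X) : Prop :=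
  forall (I : Type) (U : I -> set X),
    (forall i, mopen (U i)) -> K `<=` \bigcup_(i in setT) U i ->
    exists s : seq I, K `<=` \bigcup_(i in [set i | List.In i s]) U i.

Definition locally_compact : Prop :=
  forall x : X, exists (U K : set X), [/\ mopen U, U x, U `<=` K & mcompact K].

Definition cauchy_seq (u : nat -> X) : Prop :=
  forall e : R, 0 < e -> exists N : nat, forall m n, (N <= m)%N -> (N <= n)%N ->
    rho (u m) (u n) < e.

Definition complete_metric : Prop :=
  forall u : nat -> X, cauchy_seq u ->
    exists l : X, forall e : R, 0 < e -> exists N : nat, forall n, (N <= n)%N ->
      rho (u n) l < e.

Definition geodesic (x y : X) (g : R -> X) : Prop :=
  [/\ g 0 = x, g (rho x y) = y &
      forall s t, 0 <= s <= rho x y -> 0 <= t <= rho x y ->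
        rho (g s) (g t) = `|s - t|].

Definition segment (x y : X) : set X :=
  [set z | exists g, geodesic x y g /\ exists2 t, 0 <= t <= rho x y & z = g t].

Definition is_Rtree : Prop :=
  [/\ is_metric,
      forall x y, exists g, geodesic x y g,
      (forall x y g1 g2, geodesic x y g1 -> geodesic x y g2 ->
         [set g1 t | t in [set t | 0 <= t <= rho x y]] =
         [set g2 t | t in [set t | 0 <= t <= rho x y]]) &
      forall x y z, segment x y `<=` segment x z `|` segment z y].

(** orders on X, as relations [tau a b] meaning "a tau b" *)
Definition rel := X -> X -> Prop.

Definition partial_order (tau : rel) : Prop :=
  [/\ forall x, tau x x,
      forall x y, tau x y -> tau y x -> x = y &
      forall x y z, tau x y -> tau y z -> tau x z].

Definition is_sup (tau : rel) (x y s : X) : Prop :=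
  [/\ tau x s, tau y s & forall u, tau x u -> tau y u -> tau s u].

Definition Oplus : set rel :=
  [set tau | [/\ partial_order tau,
     (forall x y, exists s, is_sup tau x y s),
     (forall x y z, tau x z -> tau z y -> rho x z + rho z y = rho x y),
     (forall x y s, is_sup tau x y s -> rho x y = rho x s + rho s y) &
     (forall x y1 y2, tau x y1 -> tau x y2 -> tau y1 y2 \/ tau y2 y1)]].

Definition has_greatest (tau : rel) : Prop := exists r, forall x, tau x r.

Definition Oplus_r : set rel := [set tau | Oplus tau /\ has_greatest tau].

Definition root_order (y : X) : rel := fun s t => segment y s t.

Definition dplus (p q : X * X) : R := rho p.1 q.1 + rho p.2 q.2.

Definition graph (tau : rel) : set (X * X) := [set p | tau p.1 p.2].

Definition exc (A B : set (X * X)) : \bar R :=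
  ereal_sup [set ereal_inf [set (dplus p q)%:E | q in B] | p in A].

Definition Hd (tau sigma : rel) : \bar R :=
  Order.max (exc (graph tau) (graph sigma)) (exc (graph sigma) (graph tau)).

Definition Hd_open (U : set rel) : Prop :=
  U `<=` Oplus_r /\
  forall tau, U tau -> exists2 e : R, 0 < e &
    forall sigma, Oplus_r sigma -> (Hd tau sigma < e%:E)%E -> U sigma.

Definition U_xy (x y : X) : set rel :=
  [set tau | Oplus tau /\ tau x y] `\` [set root_order y].

Definition baseB : set (set rel) :=
  [set U | Hd_open U] `|` [set U | exists x y, x <> y /\ U = U_xy x y].

End RTree.

Definition generated_open (T : Type) (B : set (set T)) (U : set T) : Prop :=
  exists F : set (set T), F `<=` B /\ U = \bigcup_(V in F) V.

Definition hausdorff_on (T : Type) (S : set T) (op : set T -> Prop) : Prop :=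
  forall a b, S a -> S b -> a <> b ->
    exists U V : set T, [/\ op U, op V, U a, V b & U `&` V = set0].

From mathcomp Require Import all_boot all_classical all_reals Rstruct.
From Stdlib Require Import Rdefinitions.
From mathcomp Require Import all_order all_algebra lra.

Set Implicit Arguments.
Unset Strict Implicit.
Unset Printing Implicit Defensive.
Import Order.TTheory GRing.Theory Num.Theory.
Local Open Scope classical_set_scope.
Local Open Scope ring_scope.

(* If s is the tau-supremum of x and y, then
   rho(x,y) = rho(x,s) + rho(s,y), so moving from y towards s brings one
   closer to x; as chains of an order in O_+ are geodesic, no order in O_+
   has x < y < t for a point t <> y of [ys].  Hence if x a y but not x b y,
   with a not the root order at y, and s is the b-supremum of x and y, then
   U_(x,y) and U_(y,t) are disjoint neighbourhoods of a and b, where t = s, or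
   the midpoint of [ys] when b is the root order at s.  If instead x b y but
   not x a y, the a-supremum s of x and y satisfies y a s but not y b s; and
   two distinct root orders at r1, r2 are handled with x = r2 and y the
   midpoint of [r1 r2]. *)

Lemma rel_neq_witness (X : Type) (a b : X -> X -> Prop) :
  a <> b -> exists x y, ~ (a x y <-> b x y).
Proof.
move=> ab; apply: contrapT => no_witness; apply: ab.
apply/funext => x; apply/funext => y; apply/propext.
by apply: contrapT => h; apply: no_witness; exists x, y.
Qed.

Section Separation.
Variables (X : Type) (rho : X -> X -> R).
Hypothesis rho_metric : is_metric rho.
Hypothesis geodesicP : forall x y, exists g, geodesic rho x y g.

Lemma rho_xx x : rho x x = 0.
Proof. by case: rho_metric => H _ _; exact: (proj2 (H x x)). Qed.

Lemma rho_eq0 x y : rho x y = 0 -> x = y.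
Proof. by case: rho_metric => H _ _; exact: (proj1 (H x y)). Qed.

Lemma rho_sym x y : rho x y = rho y x.
Proof. by case: rho_metric. Qed.

Lemma rho_triangle x y z : rho x z <= rho x y + rho y z.
Proof. by case: rho_metric. Qed.

Lemma rho_ge0 x y : 0 <= rho x y.
Proof. by have := rho_triangle x y x; rewrite rho_xx (rho_sym y x); lra. Qed.

Lemma geodesic_dist x y g t : geodesic rho x y g -> 0 <= t <= rho x y ->
  rho x (g t) = t /\ rho (g t) y = rho x y - t.
Proof.
case=> g0 gd giso t_bd; have /andP[t_ge0 t_le] := t_bd.
have h0 : (0 : R) <= 0 <= rho x y by rewrite lexx rho_ge0.
have hd : 0 <= rho x y <= rho x y by rewrite lexx rho_ge0.
split; first by rewrite -{1}g0 giso // sub0r normrN ger0_norm.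
by rewrite -{1}gd giso // distrC ger0_norm // subr_ge0.
Qed.

Lemma segment_dist x y z : segment rho x y z -> rho x z + rho z y = rho x y.
Proof.
case=> g [geo_g [t t_bd ->]]; have [-> ->] := geodesic_dist geo_g t_bd.
by rewrite addrC subrK.
Qed.

Lemma segment_start x y : segment rho x y x.
Proof.
have [g geo_g] := geodesicP x y; exists g; split => //.
by exists 0; [rewrite lexx rho_ge0 | case: geo_g].
Qed.

Lemma segment_self r t : segment rho r r t -> t = r.
Proof.
move/segment_dist; rewrite rho_xx (rho_sym t r) => dist0.
by apply/esym/rho_eq0; have := rho_ge0 r t; lra.
Qed.

Lemma root_order_inj r m : root_order rho r = root_order rho m -> r = m.
Proof.
move=> E; have : root_order rho m r m by exact: segment_start.
by rewrite -E => /segment_self.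
Qed.

Lemma midpoint_exists p q : p <> q -> exists m,
  [/\ segment rho p q m, m <> p, m <> q & rho p m + rho m q = rho p q].
Proof.
move=> pq; have [g geo_g] := geodesicP p q.
have d_gt0 : 0 < rho p q.
  by rewrite lt_neqAle rho_ge0 andbT; apply/eqP => /esym/rho_eq0.
have half_bd : 0 <= rho p q / 2 <= rho p q by apply/andP; split; lra.
have [dp dq] := geodesic_dist geo_g half_bd.
have m_seg : segment rho p q (g (rho p q / 2)).
  by exists g; split => //; exists (rho p q / 2).
exists (g (rho p q / 2)); split => //; last by rewrite dp dq; lra.
- by move=> E; move: dp; rewrite E rho_xx; lra.
- by move=> E; move: dq; rewrite E rho_xx; lra.
Qed.

Lemma Oplus_chain tau x y z : Oplus rho tau -> tau x y -> tau y z ->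
  rho x z = rho x y + rho y z.
Proof. by case=> _ _ chain _ _ xy yz; rewrite (chain _ _ _ xy yz). Qed.

Lemma Oplus_chain_backtrack tau x y s t : Oplus rho tau -> tau x y -> tau y t ->
  rho x y = rho x s + rho s y -> rho y t + rho t s = rho y s -> y = t.
Proof.
move=> Otau xy yt s_between t_between; apply: rho_eq0.
have := Oplus_chain Otau xy yt; have := rho_triangle x s t.
have := rho_ge0 y t; have := rho_sym s t; have := rho_sym s y; lra.
Qed.

Definition separated (a b : X -> X -> Prop) : Prop :=
  exists U V : set (X -> X -> Prop),
    [/\ generated_open (baseB rho) U, generated_open (baseB rho) V, U a, V b
      & U `&` V = set0].

Lemma separated_sym a b : separated a b -> separated b a.
Proof. by case=> U [V [oU oV Ua Vb UV]]; exists V, U; rewrite setIC. Qed.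

Lemma U_xy_open x y : x <> y -> generated_open (baseB rho) (U_xy rho x y).
Proof.
move=> xy; exists [set U_xy rho x y]; split; last by rewrite bigcup_set1.
by move=> U ->; right; exists x, y.
Qed.

Lemma separated_U_xy a b x y u v : x <> y -> u <> v ->
  U_xy rho x y a -> U_xy rho u v b ->
  (forall tau, Oplus rho tau -> tau x y -> tau u v -> False) -> separated a b.
Proof.
move=> xy uv Ua Ub disj; exists (U_xy rho x y), (U_xy rho u v).
split; [exact: U_xy_open | exact: U_xy_open | by [] | by [] |].
by rewrite -subset0 => tau [[[Otau txy] _] [[_ tuv] _]]; exact: disj Otau txy tuv.
Qed.

Lemma step_towards b y s : Oplus rho b -> b y s -> y <> s ->
  exists2 t, y <> t /\ U_xy rho y t b & rho y t + rho t s = rho y s.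
Proof.
move=> Ob bys ys; have [bs | bs] := pselect (b = root_order rho s); last first.
  exists s; last by rewrite rho_xx addr0.
  by split.
have [m [m_seg ms my dist_m]] := midpoint_exists (nesym ys).
exists m; last by move: dist_m; rewrite (rho_sym s m) (rho_sym m y) (rho_sym s y); lra.
split; first exact: nesym.
split; first split => //; first by rewrite bs.
by rewrite bs => /root_order_inj/esym.
Qed.

Lemma separated_of_le_not_le a b x y : Oplus rho a -> Oplus rho b ->
  a x y -> ~ b x y -> a <> root_order rho y -> separated a b.
Proof.
move=> Oa Ob axy bxy ay.
have [[brefl _ _] bsup _ bdist _] := Ob.
have [s sup_s] := bsup x y; have [bxs bys _] := sup_s.
have xy : x <> y by move=> E; apply: bxy; rewrite E; exact: brefl.
have ys : y <> s by move=> E; apply: bxy; rewrite E.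
have [t [yt Ub] dist_t] := step_towards Ob bys ys.
apply: (separated_U_xy xy yt _ Ub) => [|tau Otau txy tyt]; first by split; first split.
exact: yt (Oplus_chain_backtrack Otau txy tyt (bdist _ _ _ sup_s) dist_t).
Qed.

Lemma separated_root_orders r1 r2 : r1 <> r2 ->
  Oplus rho (root_order rho r1) -> Oplus rho (root_order rho r2) ->
  separated (root_order rho r1) (root_order rho r2).
Proof.
move=> r12 O1 O2; have [m [m_seg m1 m2 _]] := midpoint_exists r12.
apply: (separated_of_le_not_le (x := r2) (y := m)) => //.
- by move/segment_self.
- by move/root_order_inj/esym.
Qed.

Lemma separated_of_not_root a b : Oplus rho a -> Oplus rho b -> a <> b ->
  (forall r, a <> root_order rho r) -> separated a b.
Proof.
move=> Oa Ob ab a_not_root; have [x [y ab_xy]] := rel_neq_witness ab.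
have [axy | naxy] := pselect (a x y).
  by apply: (separated_of_le_not_le Oa Ob axy) => // bxy; apply: ab_xy.
have bxy : b x y by apply: contrapT => nbxy; apply: ab_xy.
have [_ asup _ adist _] := Oa; have [s sup_s] := asup x y; have [axs ays _] := sup_s.
apply: (separated_of_le_not_le Oa Ob ays) => // bys; apply: naxy.
suff -> : y = s by [].
by apply: (Oplus_chain_backtrack Ob bxy bys (adist _ _ _ sup_s)); rewrite rho_xx addr0.
Qed.

End Separation.

Theorem lemma3 (X : Type) (rho : X -> X -> R) :
  is_Rtree rho -> complete_metric rho -> locally_compact rho ->
  hausdorff_on (Oplus rho) (generated_open (baseB rho)).
Proof.
case=> metric geod _ _ _ _ a b Oa Ob ab; rewrite -/(separated rho a b).
have [[r1 ar1] | a_not_root] := pselect (exists r, a = root_order rho r); last first.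
  by apply: separated_of_not_root => // r ar; apply: a_not_root; exists r.
have [[r2 br2] | b_not_root] := pselect (exists r, b = root_order rho r); last first.
  apply/separated_sym/separated_of_not_root => // [|r br]; first exact: nesym.
  by apply: b_not_root; exists r.
subst a b; apply: separated_root_orders => // r12.
by rewrite r12 in ab.
Qed.
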